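(* Consider problem (P) and suppose Assumptions A and B hold. Let $\{x^t\}$ be generated by SCP$_{ls}$ and, for each $t$, let $\lambda^t\in\mathbb R^m_+$ be a Lagrange multiplier of the subproblem at iteration $t$ with $(\tilde L_f,\tilde L_g)=(L_f^t,L_g^t)$. Then $\{\lambda^t\}$ is bounded, and every accumulation point of $\{x^t\}$ is a stationary point of (P).
   Context: Problem (P): $\min_{x\in\mathbb R^n}F(x):=f(x)+P_1(x)-P_2(x)+\delta_{\{g\le 0\}}(x)$, where $f:\mathbb R^n\to\mathbb R$ is continuously differentiable, $P_1,P_2:\mathbb R^n\to\mathbb R$ are convex and continuous, $g=(g_1,\dots,g_m):\mathbb R^n\to\mathbb R^m$ is continuous with $\{x:g(x)\le0\}\neq\emptyset$ (componentwise inequalities), $\delta_C$ the indicator function of $C$. Assumption A: (i) $\nabla f$ is Lipschitz with modulus $L_f$; (ii) each $g_i$ is differentiable with $\nabla g_i$ Lipschitz with modulus $L_{g_i}$; (iii) $F$ is level-bounded. Assumption B (MFCQ): each $g_i$ is continuously differentiable and for every $x$ with $g(x)\le0$ there is $d$ with $\langle\nabla g_i(x),d\rangle<0$ for all $i\in I(x):=\{j:g_j(x)=0\}$. Stationary point: $x$ is a stationary point of (P) if there exists $\lambda\in\mathbb R^m_+$ with $g(x)\le0$, $\lambda_ig_i(x)=0$ for all $i$, and $0\in\nabla f(x)+\partial P_1(x)-\partial P_2(x)+\sum_{i=1}^m\lambda_i\nabla g_i(x)$ (convex subdifferentials). $\bar G(x,y,w)\in\mathbb R^m$ has components $\bar G_i(x,y,w)=g_i(y)+\langle\nabla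 g_i(y),x-y\rangle+\frac{w_i}{2}\|x-y\|^2$. Algorithm SCP$_{ls}$: fix $c>0$, $0<\underline L<\bar L$, $\tau>1$ and $x^0$ with $g(x^0)\le0$. For $t=0,1,2,\dots$: (1) pick any $\xi^t\in\partial P_2(x^t)$; (2) choose $L_f^{t,0}\in[\underline L,\bar L]$, $L_g^{t,0}\in[\underline L,\bar L]^m$ arbitrarily, set $\tilde L_f=L_f^{t,0}$, $\tilde L_g=L_g^{t,0}$; (3) compute $\tilde x$ solving: minimize $\langle\nabla f(x^t)-\xi^t,x-x^t\rangle+\frac{\tilde L_f}{2}\|x-x^t\|^2+P_1(x)$ subject to $\bar G(x,x^t,\tilde L_g)\le0$. If $g(\tilde x)\le0$ and $F(\tilde x)\le F(x^t)-\frac c2\|\tilde x-x^t\|^2$, set $x^{t+1}=\tilde x$, $L_f^t=\tilde L_f$, $L_g^t=\tilde L_g$ and go to iteration $t+1$; otherwise, if $g(\tilde x)\not\le0$ replace $\tilde L_g$ by $\tau\tilde L_g$, while if $g(\tilde x)\le0$ but the decrease inequality fails replace $\tilde L_f$ by $\tau\tilde L_f$, and repeat step (3). A Lagrange multiplier of the subproblem at iteration $t$ with $(L_f^t,L_g^t)$ is a vector $\lambda\in\mathbb R^m_+$ such that $x^{t+1}$ minimizes $x\mapsto\langle\nabla f(x^t)-\xi^t,x-x^t\rangle+\frac{L_f^t}{2}\|x-x^t\|^2+P_1(x)+\langle\lambda,\bar G(x,x^t,L_g^t)\rangle$ and $\lambda_i\bar G_i(x^{t+1},x^t,L_g^t)=0$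 for all $i$ (such multipliers exist under Assumptions A and B). *)

From Stdlib Require Import Reals.
From mathcomp Require Import ssreflect ssrfun ssrbool eqtype ssrnat seq fintype bigop.
Open Scope R_scope.

Definition Vec (n : nat) : Type := 'I_n -> R.

Definition vadd {n} (x y : Vec n) : Vec n := fun i => x i + y i.
Definition vsub {n} (x y : Vec n) : Vec n := fun i => x i - y i.
Definition dot {n} (x y : Vec n) : R := \big[Rplus/0]_(i < n) (x i * y i).
Definition norm {n} (x : Vec n) : R := sqrt (dot x x).

Definition cont {n} (h : Vec n -> R) : Prop :=
  forall x eps, 0 < eps -> exists delta, 0 < delta /\
    forall y, norm (vsub y x) < delta -> Rabs (h y - h x) < eps.

Definition cont_vec {n} (G : Vec n -> Vec n) : Prop :=
  forall x eps, 0 < eps -> exists delta, 0 < delta /\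
    forall y, norm (vsub y x) < delta -> norm (vsub (G y) (G x)) < eps.

Definition has_gradient {n} (h : Vec n -> R) (dh : Vec n -> Vec n) : Prop :=
  forall x eps, 0 < eps -> exists delta, 0 < delta /\
    forall u, norm u < delta ->
      Rabs (h (vadd x u) - h x - dot (dh x) u) <= eps * norm u.

Definition lipschitz_vec {n} (G : Vec n -> Vec n) (L : R) : Prop :=
  forall x y, norm (vsub (G x) (G y)) <= L * norm (vsub x y).

Definition convex_fun {n} (h : Vec n -> R) : Prop :=
  forall x y a, 0 <= a <= 1 ->
    h (fun i => a * x i + (1 - a) * y i) <= a * h x + (1 - a) * h y.

Definition subdiff {n} (h : Vec n -> R) (x v : Vec n) : Prop :=
  forall y, h x + dot v (vsub y x) <= h y.

Definition feasible {n m} (g : 'I_m -> Vec n -> R) (x : Vec n) : Prop :=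
  forall i, g i x <= 0.

(* finite part of F = f + P1 - P2 (F = +oo outside the feasible set) *)
Definition Fval {n} (f P1 P2 : Vec n -> R) (x : Vec n) : R := f x + P1 x - P2 x.

Definition level_bounded {n m} (f P1 P2 : Vec n -> R) (g : 'I_m -> Vec n -> R) : Prop :=
  forall alpha, exists B, forall x,
    feasible g x -> Fval f P1 P2 x <= alpha -> norm x <= B.

Definition MFCQ {n m} (g : 'I_m -> Vec n -> R) (dg : 'I_m -> Vec n -> Vec n) : Prop :=
  forall x, feasible g x -> exists d : Vec n,
    forall i, g i x = 0 -> dot (dg i x) d < 0.

Definition stationary {n m} (f : Vec n -> R) (df : Vec n -> Vec n) (P1 P2 : Vec n -> R)
  (g : 'I_m -> Vec n -> R) (dg : 'I_m -> Vec n -> Vec n) (x : Vec n) : Prop :=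
  exists lam : 'I_m -> R,
    (forall i, 0 <= lam i) /\ feasible g x /\ (forall i, lam i * g i x = 0) /\
    exists u1 u2 : Vec n, subdiff P1 x u1 /\ subdiff P2 x u2 /\
      forall j, df x j + u1 j - u2 j + \big[Rplus/0]_(i < m) (lam i * dg i x j) = 0.

Definition Gbar {n m} (g : 'I_m -> Vec n -> R) (dg : 'I_m -> Vec n -> Vec n)
  (x y : Vec n) (w : 'I_m -> R) (i : 'I_m) : R :=
  g i y + dot (dg i y) (vsub x y) + w i / 2 * dot (vsub x y) (vsub x y).

Definition subobj {n} (df : Vec n -> Vec n) (P1 : Vec n -> R)
  (xt xi : Vec n) (Lf : R) (x : Vec n) : R :=
  dot (vsub (df xt) xi) (vsub x xt) + Lf / 2 * dot (vsub x xt) (vsub x xt) + P1 x.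

Definition solves_sub {n m} (df : Vec n -> Vec n) (P1 : Vec n -> R)
  (g : 'I_m -> Vec n -> R) (dg : 'I_m -> Vec n -> Vec n)
  (xt xi : Vec n) (Lf : R) (Lg : 'I_m -> R) (z : Vec n) : Prop :=
  (forall i, Gbar g dg z xt Lg i <= 0) /\
  forall x, (forall i, Gbar g dg x xt Lg i <= 0) ->
    subobj df P1 xt xi Lf z <= subobj df P1 xt xi Lf x.

Definition sub_multiplier {n m} (df : Vec n -> Vec n) (P1 : Vec n -> R)
  (g : 'I_m -> Vec n -> R) (dg : 'I_m -> Vec n -> Vec n)
  (xt xi : Vec n) (Lf : R) (Lg : 'I_m -> R) (z : Vec n) (lam : 'I_m -> R) : Prop :=
  (forall i, 0 <= lam i) /\
  (forall x, subobj df P1 xt xi Lf z + \big[Rplus/0]_(i < m) (lam i * Gbar g dg z xt Lg i)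
             <= subobj df P1 xt xi Lf x + \big[Rplus/0]_(i < m) (lam i * Gbar g dg x xt Lg i)) /\
  (forall i, lam i * Gbar g dg z xt Lg i = 0).

(* For iteration t the line
   search performs trials k = 0..K t with parameters (Lft t k, Lgt t k) and
   trial points xtr t k; the last trial is accepted and gives x (t+1).
   The final parameters (L_f^t, L_g^t) are (Lft t (K t), Lgt t (K t)). *)
Definition SCPls_run {n m} (f : Vec n -> R) (df : Vec n -> Vec n) (P1 P2 : Vec n -> R)
  (g : 'I_m -> Vec n -> R) (dg : 'I_m -> Vec n -> Vec n)
  (c Lmin Lmax tau : R)
  (x : nat -> Vec n) (xi : nat -> Vec n) (K : nat -> nat)
  (Lft : nat -> nat -> R) (Lgt : nat -> nat -> 'I_m -> R)
  (xtr : nat -> nat -> Vec n) : Prop :=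
  let accepted t z :=
    feasible g z /\
    Fval f P1 P2 z <= Fval f P1 P2 (x t) - c / 2 * dot (vsub z (x t)) (vsub z (x t)) in
  feasible g (x 0%nat) /\
  forall t : nat,
    subdiff P2 (x t) (xi t) /\
    (Lmin <= Lft t 0%nat <= Lmax) /\ (forall i, Lmin <= Lgt t 0%nat i <= Lmax) /\
    (forall k : nat, (k <= K t)%N ->
       solves_sub df P1 g dg (x t) (xi t) (Lft t k) (Lgt t k) (xtr t k)) /\
    (forall k : nat, (k < K t)%N ->
       ~ accepted t (xtr t k) /\
       (~ feasible g (xtr t k) ->
          Lgt t k.+1 = (fun i => tau * Lgt t k i) /\ Lft t k.+1 = Lft t k) /\
       (feasible g (xtr t k) ->
          Lft t k.+1 = tau * Lft t k /\ Lgt t k.+1 = Lgt t k)) /\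
    accepted t (xtr t (K t)) /\
    x t.+1 = xtr t (K t).

Definition accumulation_point {n} (x : nat -> Vec n) (xs : Vec n) : Prop :=
  forall eps N, 0 < eps -> exists t, (N <= t)%N /\ norm (vsub (x t) xs) < eps.

(* Each accepted step decreases [F] by [c/2 |x^{t+1} - x^t|^2]; together with
   level-boundedness this keeps the iterates bounded and drives the steps to 0.
   The line search stops as soon as the parameters exceed thresholds given by the
   descent lemma, so the accepted parameters are bounded, and so are the
   subgradients of [P2] at the bounded iterates.  Along a convergent subsequence
   the subproblems' Lagrangian inequalities then pass to the limit: with bounded
   multipliers they become the KKT conditions of (P) at the accumulation point;
   if the multipliers were unbounded, normalizing them would produce a nonzero
   multiplier [mu >= 0] with [0 <= sum_i mu_i Gbar_i(y)] for all [y] at a feasible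
   point, which MFCQ excludes. *)

From Stdlib Require Import Reals Lra Lia Classical ClassicalEpsilon FunctionalExtensionality.
From mathcomp Require Import ssreflect ssrfun ssrbool eqtype ssrnat seq fintype bigop.
From mathcomp Require Import zify.
From HB Require Import structures.
Open Scope R_scope.

HB.instance Definition _ := Monoid.isComLaw.Build R 0 Rplus
  (fun a b c => esym (Rplus_assoc a b c)) Rplus_comm Rplus_0_l.

Lemma Rabs_le_inv (a b : R) : Rabs a <= b -> - b <= a <= b.
Proof. by split_Rabs; lra. Qed.

Section RealSums.
Context {I : finType}.
Implicit Types F G : I -> R.

Lemma mulR_sumr (a : R) F :
  a * \big[Rplus/0]_(i : I) F i = \big[Rplus/0]_(i : I) (a * F i).
Proof. by elim: (index_enum I) => [|j r IH]; rewrite ?big_nil ?big_cons -?IH /=; ring. Qed.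

Lemma sumRB F G :
  \big[Rplus/0]_(i : I) (F i - G i) = \big[Rplus/0]_(i : I) F i - \big[Rplus/0]_(i : I) G i.
Proof. by elim: (index_enum I) => [|j r IH]; rewrite ?big_nil ?big_cons ?IH /=; ring. Qed.

Lemma leR_sum F G : (forall i, F i <= G i) ->
  \big[Rplus/0]_(i : I) F i <= \big[Rplus/0]_(i : I) G i.
Proof. by move=> FG; apply: big_ind2 => // [|a b c d]; lra. Qed.

Lemma sumR_ge0 F : (forall i, 0 <= F i) -> 0 <= \big[Rplus/0]_(i : I) F i.
Proof. by move=> F0; apply: big_ind => // [|a b]; lra. Qed.

Lemma leR_sum_term F j : (forall i, 0 <= F i) -> F j <= \big[Rplus/0]_(i : I) F i.
Proof.
move=> F0; rewrite (bigD1 j) //=.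
have : 0 <= \big[Rplus/0]_(i | i != j) F i by apply: big_ind => // [|a b]; lra.
lra.
Qed.

Lemma Rabs_sum_le F : Rabs (\big[Rplus/0]_(i : I) F i) <= \big[Rplus/0]_(i : I) Rabs (F i).
Proof.
apply: (big_ind2 (fun u v => Rabs u <= v)) => [|a b c d ab cd|i _]; last lra.
  by rewrite Rabs_R0; lra.
by have := Rabs_triang a c; lra.
Qed.

Lemma sumR_nonpos_ge0_eq0 F : (forall i, F i <= 0) -> 0 <= \big[Rplus/0]_(i : I) F i ->
  forall i, F i = 0.
Proof.
move=> F_le0 sum_ge0 j; apply: Rle_antisym => //.
have : \big[Rplus/0]_(i | i != j) F i <= 0.
  by apply: (big_ind (fun x => x <= 0)) => // [|a b]; lra.
by move: sum_ge0; rewrite (bigD1 j) //=; lra.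
Qed.

Lemma sumR_kronecker F j :
  \big[Rplus/0]_(i : I) (F i * (if i == j then 1 else 0)) = F j.
Proof. by rewrite (bigD1 j) //= eqxx big1 => [|i /negbTE ->]; ring. Qed.

End RealSums.

Lemma sumR_const_ord (n : nat) (a : R) : \big[Rplus/0]_(i < n) a = INR n * a.
Proof.
rewrite big_const_ord; elim: n => [|k IH]; first by rewrite /=; ring.
by rewrite S_INR -[iter _ _ _]/(a + iter k (Rplus a) 0) IH; ring.
Qed.

Section Vectors.
Context {n : nat}.
Implicit Types a b c w : Vec n.

Lemma dotC a b : dot a b = dot b a.
Proof. by apply: eq_bigr => i _; ring. Qed.

Lemma dot_ge0 a : 0 <= dot a a.
Proof. by apply: sumR_ge0 => i; nra. Qed.

Lemma dotBl a b c : dot (vsub a b) c = dot a c - dot b c.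
Proof. by rewrite /dot -sumRB; apply: eq_bigr => i _; rewrite /vsub; ring. Qed.

Lemma dotZl (s : R) a b : dot (fun i => s * a i) b = s * dot a b.
Proof. by rewrite /dot mulR_sumr; apply: eq_bigr => i _; ring. Qed.

Lemma dotZr (s : R) a b : dot a (fun i => s * b i) = s * dot a b.
Proof. by rewrite dotC dotZl dotC. Qed.

Lemma dotNl a b : dot (fun i => - a i) b = - dot a b.
Proof.
have -> : - dot a b = -1 * dot a b by ring.
by rewrite -dotZl; apply: eq_bigr => i _; ring.
Qed.

Lemma vsubxx a : vsub a a = (fun _ => 0).
Proof. by apply: functional_extensionality => i; rewrite /vsub; ring. Qed.

Lemma dot0r a : dot a (fun _ => 0) = 0.
Proof. by rewrite /dot big1 // => i _; ring. Qed.

Lemma norm_ge0 a : 0 <= norm a.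
Proof. exact: sqrt_pos. Qed.

Lemma norm_sq a : norm a * norm a = dot a a.
Proof. exact/sqrt_sqrt/dot_ge0. Qed.

Lemma normZ (s : R) a : norm (fun i => s * a i) = Rabs s * norm a.
Proof.
rewrite /norm dotZl dotZr -Rmult_assoc sqrt_mult ?sqrt_Rsqr_abs //; last exact: dot_ge0.
exact: Rle_0_sqr.
Qed.

Lemma Rabs_coord_le_norm a i : Rabs (a i) <= norm a.
Proof.
have sq_le : a i * a i <= dot a a by apply: (leR_sum_term (fun j => a j * a j)) => j; nra.
apply: Rsqr_incr_0_var; last exact: norm_ge0.
by rewrite /Rsqr norm_sq -Rabs_mult Rabs_right; nra.
Qed.

(* A crude substitute for Cauchy-Schwarz. *)
Lemma Rabs_dot_le a b : Rabs (dot a b) <= INR n * norm a * norm b.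
Proof.
apply: Rle_trans (Rabs_sum_le _) _.
rewrite Rmult_assoc -sumR_const_ord.
apply: leR_sum => i; rewrite Rabs_mult.
by apply: Rmult_le_compat; apply: Rabs_pos || apply: Rabs_coord_le_norm.
Qed.

Lemma norm_lt_of_coords {eps} : 0 < eps -> exists del, 0 < del /\
  forall w, (forall i, Rabs (w i) < del) -> norm w < eps.
Proof.
move=> eps0; have n0 := pos_INR n.
exists (eps / (INR n + 1)); split; first by apply: Rdiv_lt_0_compat; lra.
move=> w wdel; set del := eps / (INR n + 1) in wdel.
have ww : dot w w <= INR n * (del * del).
  rewrite -sumR_const_ord; apply: leR_sum => i.
  have := wdel i; have := Rabs_pos (w i).
  have -> : w i * w i = Rabs (w i) * Rabs (w i) by rewrite -Rabs_mult Rabs_right; nra.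
  nra.
have del_eps : INR n * (del * del) < eps * eps.
  have -> : INR n * (del * del) = eps * eps * (INR n / ((INR n + 1) * (INR n + 1))).
    by rewrite /del; field; lra.
  have : INR n / ((INR n + 1) * (INR n + 1)) < 1.
    apply: (Rmult_lt_reg_r ((INR n + 1) * (INR n + 1))); first nra.
    by rewrite /Rdiv Rmult_assoc Rinv_l; nra.
  have : 0 < eps * eps by nra.
  set q := INR n / _; nra.
rewrite /norm -(sqrt_square eps); last lra.
by apply: sqrt_lt_1; [exact: dot_ge0 | nra | lra].
Qed.

Definition unit_vec (i : 'I_n) : Vec n := fun j => if j == i then 1 else 0.

Lemma dot_unit_vec a i : dot a (unit_vec i) = a i.
Proof. exact: (sumR_kronecker (fun j => a j)). Qed.

End Vectors.

Definition Un_cv_coord {I : Type} (u : nat -> I -> R) (l : I -> R) : Prop :=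
  forall i, Un_cv (fun j => u j i) (l i).

Definition increasing (phi : nat -> nat) : Prop := forall j, (phi j < phi j.+1)%N.

Lemma increasing_ge {phi} : increasing phi -> forall j, (j <= phi j)%N.
Proof. by move=> phi_incr; elim=> [|j IH] //; have := phi_incr j; lia. Qed.

Lemma increasing_comp phi psi : increasing phi -> increasing psi -> increasing (phi \o psi).
Proof.
move=> phi_incr psi_incr j /=; have := psi_incr j.
elim: (psi j.+1) => [|k IH] //.
by rewrite ltnS leq_eqVlt => /orP [/eqP -> | /IH]; have := phi_incr k; lia.
Qed.

Lemma Un_cv_subseq {u l} {T : nat -> nat} :
  Un_cv u l -> (forall j, (j <= T j)%N) -> Un_cv (fun j => u (T j)) l.
Proof.
move=> ul T_ge eps eps0; have [N HN] := ul eps eps0.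
by exists N => j jN; apply: HN; have := T_ge j; lia.
Qed.

Lemma Un_cv_const (a : R) : Un_cv (fun _ => a) a.
Proof. by move=> eps eps0; exists 0%nat => j _; rewrite /R_dist Rminus_diag Rabs_R0. Qed.

Lemma Un_cv_big {I : finType} {u : nat -> I -> R} {l : I -> R} : Un_cv_coord u l ->
  Un_cv (fun j => \big[Rplus/0]_(i : I) u j i) (\big[Rplus/0]_(i : I) l i).
Proof.
move=> ul; elim: (index_enum I) => [|i r IH].
  by rewrite big_nil; apply: (Un_cv_ext _ _ _ _ (Un_cv_const 0)) => j; rewrite big_nil.
by rewrite big_cons; apply: (Un_cv_ext _ _ _ _ (CV_plus _ _ _ _ (ul i) IH)) => j;
  rewrite big_cons.
Qed.

Lemma Un_cv_dot {n} {a b : nat -> Vec n} {la lb} : Un_cv_coord a la -> Un_cv_coord b lb ->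
  Un_cv (fun j => dot (a j) (b j)) (dot la lb).
Proof. by move=> ala blb; apply: Un_cv_big => i; apply: CV_mult. Qed.

Lemma Un_cv_coordB {n} {a b : nat -> Vec n} {la lb} : Un_cv_coord a la -> Un_cv_coord b lb ->
  Un_cv_coord (fun j => vsub (a j) (b j)) (vsub la lb).
Proof. by move=> ala blb i; apply: CV_minus. Qed.

Lemma eventually_forall {I : finType} {P : I -> nat -> Prop} :
  (forall i, exists N, forall j, (N <= j)%N -> P i j) ->
  exists N, forall j, (N <= j)%N -> forall i, P i j.
Proof.
move=> ev_P.
suff [N HN] : exists N, forall j, (N <= j)%N -> forall i, i \in enum I -> P i j.
  by exists N => j jN i; apply: HN; rewrite ?mem_enum.
elim: (enum I) => [|i s [N HN]]; first by exists 0%N.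
have [Ni HNi] := ev_P i; exists (maxn N Ni) => j jN k.
rewrite in_cons => /orP [/eqP -> | ks]; [apply: HNi | apply: HN] => //; lia.
Qed.

Lemma Un_cv_coord_norm {n} {u : nat -> Vec n} {l} : Un_cv_coord u l ->
  forall eps, 0 < eps -> exists N, forall j, (N <= j)%N -> norm (vsub (u j) l) < eps.
Proof.
move=> ul eps eps0; have [del [del0 Hdel]] := norm_lt_of_coords (n:=n) eps0.
have ev_close : forall i, exists N, forall j, (N <= j)%N -> Rabs (u j i - l i) < del.
  by move=> i; have [N HN] := ul i del del0; exists N => j jN; apply: HN; lia.
have [N HN] := eventually_forall ev_close.
by exists N => j jN; apply: Hdel; apply: HN.
Qed.

Lemma Un_cv_cont {n} {h : Vec n -> R} {u : nat -> Vec n} {l} : cont h -> Un_cv_coord u l ->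
  Un_cv (fun j => h (u j)) (h l).
Proof.
move=> h_cont ul eps eps0; have [del [del0 Hdel]] := h_cont l eps eps0.
have [N HN] := Un_cv_coord_norm ul del del0.
by exists N => j jN; apply: Hdel; apply: HN; lia.
Qed.

Lemma Un_cv_coord_cont {n} {G : Vec n -> Vec n} {u : nat -> Vec n} {l} : cont_vec G ->
  Un_cv_coord u l -> Un_cv_coord (fun j => G (u j)) (G l).
Proof.
move=> G_cont ul i eps eps0; have [del [del0 Hdel]] := G_cont l eps eps0.
have [N HN] := Un_cv_coord_norm ul del del0.
exists N => j jN; apply: Rle_lt_trans (Hdel _ (HN j _)); last lia.
exact: (Rabs_coord_le_norm (vsub (G (u j)) (G l)) i).
Qed.

Lemma inv_INR_succ_small {eps} : 0 < eps ->
  exists N, forall j, (N <= j)%N -> / (INR j + 1) < eps.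
Proof.
move=> eps0; have [N HN] := INR_unbounded (/ eps); exists N => j jN.
have : INR N <= INR j by apply/le_INR; lia.
move=> Nj; rewrite -(Rinv_inv eps); apply: Rinv_lt_contravar; last lra.
by apply: Rmult_lt_0_compat; [apply: Rinv_0_lt_compat | have := pos_INR N; lra].
Qed.

Lemma frequently_subseq {P : nat -> nat -> Prop} :
  (forall k N, exists p, (N <= p)%N /\ P k p) ->
  exists phi, increasing phi /\ forall j, P j (phi j).
Proof.
move=> freq_P; have [pick Hpick] := choice (fun kN p => (kN.2 <= p)%N /\ P kN.1 p)
  (fun kN => freq_P kN.1 kN.2).
pose fix phi j := if j is j'.+1 then pick (j, (phi j').+1) else pick (0%N, 0%N).
exists phi; split => [j | [|j]] /=; last by case: (Hpick (j.+1, (phi j).+1)).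
  by case: (Hpick (j.+1, (phi j).+1)).
by case: (Hpick (0%N, 0%N)).
Qed.

Lemma bounded_real_subseq (u : nat -> R) B : (forall j, Rabs (u j) <= B) ->
  exists phi l, increasing phi /\ Un_cv (fun j => u (phi j)) l.
Proof.
move=> uB; have [l adh_l] : exists l, ValAdh u l.
  apply: (Bolzano_Weierstrass u _ (compact_P3 (- B) B)) => j.
  by have := uB j; split_Rabs; lra.
have freq : forall k N, exists p, (N <= p)%N /\ Rabs (u p - l) < / (INR k + 1).
  move=> k N; have k0 : 0 < / (INR k + 1) by apply/Rinv_0_lt_compat; have := pos_INR k; lra.
  have nbhd : neighbourhood (fun y => Rabs (y - l) < / (INR k + 1)) l.
    by exists (mkposreal _ k0) => y yl.
  have [p [Np close]] := adh_l _ N nbhd.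
  by exists p; split => //; apply/leP.
have [phi [phi_incr Hphi]] := frequently_subseq freq.
exists phi, l; split => // eps eps0; have [N HN] := inv_INR_succ_small eps0.
by exists N => j jN; apply: Rlt_trans (Hphi j) (HN j _); lia.
Qed.

Lemma bounded_subseq {I : finType} {u : nat -> I -> R} {B} : (forall j i, Rabs (u j i) <= B) ->
  exists phi l, increasing phi /\ Un_cv_coord (fun j => u (phi j)) l.
Proof.
move=> uB.
suff [phi [l [phi_incr Hl]]] : exists phi l, increasing phi /\
    forall i, i \in enum I -> Un_cv (fun j => u (phi j) i) (l i).
  by exists phi, l; split => // i; apply: Hl; rewrite mem_enum.
elim: (enum I) => [|a s [phi [l [phi_incr Hl]]]].
  by exists id, (fun _ => 0); split => // j /=.
have [psi [la [psi_incr Hla]]] := @bounded_real_subseq (fun j => u (phi j) a) B (fun j => uB _ _).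
exists (phi \o psi), (fun i => if i == a then la else l i).
split; first exact: increasing_comp.
move=> i; rewrite in_cons; case: eqVneq => [-> _ | _ /= /Hl ul] //.
exact: (@Un_cv_subseq (fun j => u (phi j) i) _ psi ul (increasing_ge psi_incr)).
Qed.

Section Analysis.
Context {n : nat}.
Implicit Types (h : Vec n -> R) (dh : Vec n -> Vec n) (x y d : Vec n).

Lemma cont_bounded_on_box {h} : cont h -> forall B, exists M,
  forall y, (forall i, Rabs (y i) <= B) -> Rabs (h y) <= M.
Proof.
move=> h_cont B; apply: NNPP => unbounded.
have large : forall j : nat, exists y, (forall i, Rabs (y i) <= B) /\ INR j < Rabs (h y).
  move=> j; apply: NNPP => none; apply: unbounded; exists (INR j) => y yB.
  by apply: Rnot_lt_le => hy; apply: none; exists y.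
have [y Hy] := choice _ large.
have [phi [l [phi_incr yl]]] := bounded_subseq (fun j => proj1 (Hy j)).
have [N HN] := Un_cv_cont h_cont yl 1 Rlt_0_1.
have [N' HN'] := INR_unbounded (Rabs (h l) + 1).
have := HN (maxn N N') ltac:(lia); rewrite /R_dist.
have := proj2 (Hy (phi (maxn N N'))).
have : INR N' <= INR (phi (maxn N N')).
  by apply/le_INR; have := increasing_ge phi_incr (maxn N N'); lia.
by have := Rabs_triang_inv (h (y (phi (maxn N N')))) (h l); lra.
Qed.

Lemma has_gradient_cont {h dh} : has_gradient h dh -> cont h.
Proof.
move=> h_grad x eps eps0; have [d1 [d1_0 Hd1]] := h_grad x 1 Rlt_0_1.
pose C := INR n * norm (dh x) + 1.
have C0 : 0 < C by have := pos_INR n; have := norm_ge0 (dh x); rewrite /C; nra.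
exists (Rmin d1 (eps / C)); split; first by apply: Rmin_pos => //; apply: Rdiv_lt_0_compat.
move=> y; set u := vsub y x => yx.
have u_d1 : norm u < d1 by have := Rmin_l d1 (eps / C); lra.
have u_eps : C * norm u < eps.
  have -> : eps = C * (eps / C) by field; lra.
  by apply: Rmult_lt_compat_l => //; have := Rmin_r d1 (eps / C); lra.
have xu : vadd x u = y by apply: functional_extensionality => i; rewrite /vadd /u /vsub; ring.
have := Hd1 u u_d1; rewrite xu => first_order.
have := Rabs_dot_le (dh x) u; have := norm_ge0 u; have := pos_INR n.
have := Rabs_triang (h y - h x - dot (dh x) u) (dot (dh x) u).
have -> : h y - h x - dot (dh x) u + dot (dh x) u = h y - h x by ring.
by rewrite /C in u_eps; nra.
Qed.

Definition line x d (s : R) : Vec n := fun i => x i + s * d i.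

Lemma derivable_pt_lim_line {h dh} x d s : has_gradient h dh ->
  derivable_pt_lim (fun s => h (line x d s)) s (dot (dh (line x d s)) d).
Proof.
move=> h_grad eps eps0; have d0 := norm_ge0 d; set p := line x d s.
have eps'0 : 0 < eps / (2 * (norm d + 1)) by apply: Rdiv_lt_0_compat; lra.
have [del [del0 Hdel]] := h_grad p _ eps'0.
have del'0 : 0 < del / (norm d + 1) by apply: Rdiv_lt_0_compat; lra.
exists (mkposreal _ del'0) => r r0 /= r_del.
have r_pos : 0 < Rabs r by apply: Rabs_pos_lt.
have ru_del : norm (fun i => r * d i) < del.
  rewrite normZ; have : Rabs r * (norm d + 1) < del.
    have -> : del = del / (norm d + 1) * (norm d + 1) by field; lra.
    by apply: Rmult_lt_compat_r; lra.
  by nra.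
have := Hdel _ ru_del; rewrite dotZr normZ.
have -> : vadd p (fun i => r * d i) = line x d (s + r).
  by apply: functional_extensionality => i; rewrite /vadd /p /line; ring.
move=> first_order.
have -> : (h (line x d (s + r)) - h p) / r - dot (dh p) d =
          (h (line x d (s + r)) - h p - r * dot (dh p) d) / r by field.
rewrite /Rdiv Rabs_mult Rabs_inv; apply: (Rmult_lt_reg_r (Rabs r)) => //.
rewrite Rmult_assoc Rinv_l ?Rmult_1_r; last lra.
apply: Rle_lt_trans first_order _.
have : eps / (2 * (norm d + 1)) * norm d <= eps / 2.
  have -> : eps / 2 = eps / (2 * (norm d + 1)) * (norm d + 1) by field; lra.
  by nra.
by nra.
Qed.

(* The constant [INR n] (instead of the usual [1/2]) comes from [Rabs_dot_le]. *)
Lemma descent_lemma {h dh L} : has_gradient h dh -> lipschitz_vec dh L -> forall x y,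
  h y <= h x + dot (dh x) (vsub y x) + INR n * Rabs L * dot (vsub y x) (vsub y x).
Proof.
move=> h_grad dh_lip x y; set d := vsub y x.
pose pr s := exist (fun l => derivable_pt_lim (fun s => h (line x d s)) s l) _
  (derivable_pt_lim_line x d s h_grad).
have [c [mvt c01]] := MVT_cor1 (fun s => h (line x d s)) 0 1 pr Rlt_0_1.
have end1 : line x d 1 = y by apply: functional_extensionality => i; rewrite /line /d /vsub; ring.
have end0 : line x d 0 = x by apply: functional_extensionality => i; rewrite /line; ring.
rewrite /= end1 end0 Rminus_0_r Rmult_1_r in mvt.
have -> : h y = h x + dot (dh (line x d c)) d by lra.
set z := line x d c; set e := vsub (dh z) (dh x).
have -> : dot (dh z) d = dot (dh x) d + dot e d by rewrite dotBl; ring.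
have e_lip : norm e <= c * Rabs L * norm d.
  have zx : vsub z x = (fun i => c * d i).
    by apply: functional_extensionality => i; rewrite /z /line /vsub; ring.
  have := dh_lip z x; rewrite -/e zx normZ Rabs_right; last lra.
  have : 0 <= c * norm d by have := norm_ge0 d; nra.
  by have := Rle_abs L; nra.
have ed : norm e * norm d <= Rabs L * (norm d * norm d).
  have d0 := norm_ge0 d.
  have : 0 <= Rabs L * (norm d * norm d) by have := Rabs_pos L; nra.
  have : norm e * norm d <= c * Rabs L * norm d * norm d by nra.
  by nra.
have := Rabs_dot_le e d; have := Rle_abs (dot e d); rewrite -norm_sq.
by have := pos_INR n; nra.
Qed.

Lemma subdiff_bounded_on_box {P : Vec n -> R} : cont P -> forall B, exists M,
  forall x v, (forall i, Rabs (x i) <= B) -> subdiff P x v -> forall i, Rabs (v i) <= M.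
Proof.
move=> P_cont B; have [M HM] := cont_bounded_on_box P_cont (B + 1).
exists (3 * M) => x v xB v_sub i.
have xB1 : forall j, Rabs (x j) <= B + 1 by move=> j; have := xB j; lra.
have Px := Rabs_le_inv _ _ (HM x xB1).
have step : forall s, Rabs s <= 1 -> P x + s * v i <= M.
  move=> s s1; have := v_sub (fun j => x j + s * unit_vec i j).
  have -> : vsub (fun j => x j + s * unit_vec i j) x = (fun j => s * unit_vec i j).
    by apply: functional_extensionality => j; rewrite /vsub; ring.
  rewrite dotC dotZl dotC dot_unit_vec.
  suff /HM/Rabs_le_inv : forall j, Rabs (x j + s * unit_vec i j) <= B + 1 by lra.
  move=> j; apply: Rle_trans (Rabs_triang _ _) _; rewrite Rabs_mult.
  have : Rabs (unit_vec i j) <= 1.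
    by rewrite /unit_vec; case: (j == i); rewrite ?Rabs_R1 ?Rabs_R0; lra.
  by have := xB j; have := Rabs_pos (unit_vec i j); have := Rabs_pos s; nra.
have := step 1 ltac:(rewrite Rabs_R1; lra).
have := step (-1) ltac:(rewrite Rabs_Ropp Rabs_R1; lra).
by move=> *; apply: Rabs_le; lra.
Qed.

Lemma ge0_of_small_perturbation (a b : R) :
  (forall s, 0 < s <= 1 -> 0 <= a + s * b) -> 0 <= a.
Proof.
move=> perturb; apply: Rnot_lt_le => a_neg.
have b1 : 0 < Rabs b + 1 by have := Rabs_pos b; lra.
set s := Rmin 1 (- a / (2 * (Rabs b + 1))).
have s_pos : 0 < s by apply: Rmin_pos; [lra | apply: Rdiv_lt_0_compat; lra].
have sb : s * Rabs b < - a / 2.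
  have : s * (Rabs b + 1) <= - a / 2.
    have -> : - a / 2 = - a / (2 * (Rabs b + 1)) * (Rabs b + 1) by field; lra.
    by apply: Rmult_le_compat_r; [lra | apply: Rmin_r].
  by nra.
have := perturb s (conj s_pos (Rmin_l _ _)).
by have := Rle_abs b; nra.
Qed.

(* Convexity lets one move [y] towards [x] along a segment, where the quadratic
   term becomes negligible against the linear one. *)
Lemma subdiff_of_quadratic_minorant (P : Vec n -> R) x v (C : R) : convex_fun P ->
  (forall y, P x <= P y + dot v (vsub y x) + C * dot (vsub y x) (vsub y x)) ->
  subdiff P x (fun i => - v i).
Proof.
move=> P_conv minorant w; rewrite dotNl.
set D := dot (vsub w x) (vsub w x).
suff : 0 <= P w - P x + dot v (vsub w x) by lra.
apply: (ge0_of_small_perturbation _ (C * D)) => s [s0 s1].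
have := minorant (fun i => s * w i + (1 - s) * x i).
have -> : vsub (fun i => s * w i + (1 - s) * x i) x = (fun i => s * vsub w x i).
  by apply: functional_extensionality => i; rewrite /vsub; ring.
rewrite dotZr dotZl dotZr -/D.
have := P_conv w x s (conj (Rlt_le _ _ s0) s1) => convexity minor.
apply: (Rmult_le_reg_l s) => //; lra.
Qed.

End Analysis.

Lemma dot_lincomb {n m} (mu : 'I_m -> R) (G : 'I_m -> Vec n) (a d : Vec n) :
  dot (fun j => a j + \big[Rplus/0]_(i < m) (mu i * G i j)) d =
  dot a d + \big[Rplus/0]_(i < m) (mu i * dot (G i) d).
Proof.
rewrite /dot -(eq_bigr _ (fun j _ => esym (Rmult_plus_distr_r _ _ (d j)))) big_split /=.
congr (_ + _); under eq_bigr => j _ do rewrite Rmult_comm mulR_sumr.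
rewrite exchange_big; apply: eq_bigr => i _ /=.
rewrite mulR_sumr; apply: eq_bigr => j _; ring.
Qed.

Section Limits.
Context {n m : nat}.
Variables (f : Vec n -> R) (df : Vec n -> Vec n) (P1 P2 : Vec n -> R).
Variables (g : 'I_m -> Vec n -> R) (dg : 'I_m -> Vec n -> Vec n).

Lemma Gbar_self z w i : Gbar g dg z z w i = g i z.
Proof. by rewrite /Gbar vsubxx !dot0r; ring. Qed.

Lemma subobj_self z u L : subobj df P1 z u L z = P1 z.
Proof. by rewrite /subobj vsubxx !dot0r; ring. Qed.

Lemma complementarity {xs} {w mu : 'I_m -> R} : feasible g xs -> (forall i, 0 <= mu i) ->
  0 <= \big[Rplus/0]_(i < m) (mu i * Gbar g dg xs xs w i) -> forall i, mu i * g i xs = 0.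
Proof.
move=> feas mu0; under eq_bigr => i _ do rewrite Gbar_self.
by apply: sumR_nonpos_ge0_eq0 => i; have := mu0 i; have := feas i; nra.
Qed.

Lemma sum_Gbar_compl xs y (w mu : 'I_m -> R) : (forall i, mu i * g i xs = 0) ->
  \big[Rplus/0]_(i < m) (mu i * Gbar g dg y xs w i) =
  \big[Rplus/0]_(i < m) (mu i * dot (dg i xs) (vsub y xs))
  + \big[Rplus/0]_(i < m) (mu i * (w i / 2)) * dot (vsub y xs) (vsub y xs).
Proof.
move=> compl; rewrite Rmult_comm mulR_sumr -big_split; apply: eq_bigr => i _ /=.
by rewrite /Gbar -[RHS]Rplus_0_l -(compl i); ring.
Qed.

(* [mu] is a Fritz John multiplier without objective part; MFCQ rules it out. *)
Lemma MFCQ_multipliers_eq0 {xs} {w mu : 'I_m -> R} :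
  MFCQ g dg -> feasible g xs -> (forall i, 0 <= mu i) ->
  (forall y, 0 <= \big[Rplus/0]_(i < m) (mu i * Gbar g dg y xs w i)) ->
  forall i, mu i = 0.
Proof.
move=> mfcq feas mu0 lag_ge0.
have compl := complementarity feas mu0 (lag_ge0 xs).
have [d Hd] := mfcq xs feas.
set A := \big[Rplus/0]_(i < m) (mu i * dot (dg i xs) d).
have slope : 0 <= A.
  apply: (ge0_of_small_perturbation _ (\big[Rplus/0]_(i < m) (mu i * (w i / 2)) * dot d d)).
  move=> s [s0 _]; apply: (Rmult_le_reg_l s) => //.
  have := lag_ge0 (line xs d s); rewrite sum_Gbar_compl //.
  have -> : vsub (line xs d s) xs = (fun j => s * d j).
    by apply: functional_extensionality => j; rewrite /line /vsub; ring.
  have -> : \big[Rplus/0]_(i < m) (mu i * dot (dg i xs) (fun j => s * d j)) = s * A.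
    by rewrite /A mulR_sumr; apply: eq_bigr => i _; rewrite dotZr; ring.
  by rewrite dotZl dotZr; nra.
have terms : forall i, mu i * dot (dg i xs) d = 0.
  apply: sumR_nonpos_ge0_eq0 => // i.
  case: (Req_dec (g i xs) 0) => [/Hd active | inactive]; first by have := mu0 i; nra.
  by case: (Rmult_integral _ _ (compl i)) => // ->; lra.
move=> i; case: (Req_dec (g i xs) 0) => [/Hd active | inactive].
  by case: (Rmult_integral _ _ (terms i)) => //; lra.
by case: (Rmult_integral _ _ (compl i)).
Qed.

Lemma stationary_of_limit {xs u} {C : R} {w mu : 'I_m -> R} :
  convex_fun P1 -> feasible g xs -> subdiff P2 xs u -> (forall i, 0 <= mu i) ->
  (forall y, P1 xs <=
     subobj df P1 xs u C y + \big[Rplus/0]_(i < m) (mu i * Gbar g dg y xs w i)) ->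
  stationary f df P1 P2 g dg xs.
Proof.
move=> P1_conv feas u_sub mu0 lag.
have compl : forall i, mu i * g i xs = 0.
  by apply: (complementarity (w := w)) => //; have := lag xs; rewrite subobj_self; lra.
pose v j := vsub (df xs) u j + \big[Rplus/0]_(i < m) (mu i * dg i xs j).
have minorant : forall y, P1 xs <= P1 y + dot v (vsub y xs) +
    (C / 2 + \big[Rplus/0]_(i < m) (mu i * (w i / 2))) * dot (vsub y xs) (vsub y xs).
  move=> y; have := lag y.
  by rewrite sum_Gbar_compl // /v (dot_lincomb _ (fun i => dg i xs)) /subobj; lra.
exists mu; do 3!split => //.
exists (fun j => - v j), u; split; first exact: subdiff_of_quadratic_minorant minorant.
by split => // j; rewrite /v /vsub; ring.
Qed.

Hypotheses (df_cont : cont_vec df) (P1_cont : cont P1).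
Hypotheses (g_cont : forall i, cont (g i)) (dg_cont : forall i, cont_vec (dg i)).

Lemma Un_cv_subobj {cs us zs : nat -> Vec n} {cl ul zl} (L : R) :
  Un_cv_coord cs cl -> Un_cv_coord us ul -> Un_cv_coord zs zl ->
  Un_cv (fun j => subobj df P1 (cs j) (us j) L (zs j)) (subobj df P1 cl ul L zl).
Proof.
move=> csl usl zsl; have zcs := Un_cv_coordB zsl csl.
apply: CV_plus; last exact: Un_cv_cont P1_cont zsl.
apply: CV_plus; first by apply: Un_cv_dot zcs; apply: Un_cv_coordB usl; apply: Un_cv_coord_cont.
by apply: CV_mult; [exact: Un_cv_const | exact: Un_cv_dot].
Qed.

Lemma Un_cv_multiplier_sum {mus : nat -> 'I_m -> R} {mu} {cs : nat -> Vec n} {cl} y w :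
  Un_cv_coord mus mu -> Un_cv_coord cs cl ->
  Un_cv (fun j => \big[Rplus/0]_(i < m) (mus j i * Gbar g dg y (cs j) w i))
        (\big[Rplus/0]_(i < m) (mu i * Gbar g dg y cl w i)).
Proof.
move=> musl csl; apply: Un_cv_big => i; apply: CV_mult => //.
have ycs : Un_cv_coord (fun j => vsub y (cs j)) (vsub y cl).
  by apply: Un_cv_coordB csl => k; apply: Un_cv_const.
apply: CV_plus; last by apply: CV_mult; [exact: Un_cv_const | exact: Un_cv_dot].
apply: CV_plus; first exact: Un_cv_cont (g_cont i) csl.
by apply: Un_cv_dot ycs; apply: Un_cv_coord_cont.
Qed.

End Limits.

Section Algorithm.
Variables (n m : nat).
Variables (f : Vec n -> R) (df : Vec n -> Vec n) (P1 P2 : Vec n -> R).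
Variables (g : 'I_m -> Vec n -> R) (dg : 'I_m -> Vec n -> Vec n).
Hypotheses (f_grad : has_gradient f df) (df_cont : cont_vec df).
Hypotheses (P1_conv : convex_fun P1) (P1_cont : cont P1) (P2_cont : cont P2).
Hypotheses (g_cont : forall i, cont (g i)) (dg_cont : forall i, cont_vec (dg i)).
Variable Lf : R.
Hypothesis df_lip : lipschitz_vec df Lf.
Hypothesis g_grad : forall i, has_gradient (g i) (dg i).
Variable Lg : 'I_m -> R.
Hypothesis dg_lip : forall i, lipschitz_vec (dg i) (Lg i).
Hypothesis F_level_bounded : level_bounded f P1 P2 g.
Hypothesis mfcq : MFCQ g dg.
Variables (c Lmin Lmax tau : R).
Hypotheses (c_pos : 0 < c) (Lmin_pos : 0 < Lmin) (tau_gt1 : 1 < tau).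
Variables (x xi : nat -> Vec n) (K : nat -> nat).
Variables (Lft : nat -> nat -> R) (Lgt : nat -> nat -> 'I_m -> R) (xtr : nat -> nat -> Vec n).
Hypothesis run : SCPls_run f df P1 P2 g dg c Lmin Lmax tau x xi K Lft Lgt xtr.
Variable lam : nat -> 'I_m -> R.
Hypothesis lam_mult : forall t, sub_multiplier df P1 g dg (x t) (xi t)
  (Lft t (K t)) (Lgt t (K t)) (x t.+1) (lam t).

Local Notation F := (Fval f P1 P2).
Local Notation sqdist a b := (dot (vsub a b) (vsub a b)).

Lemma run_feasible t : feasible g (x t).
Proof.
case: t => [|t]; first exact: (proj1 run).
by have [_ [_ [_ [_ [_ [[feas _] ->]]]]]] := proj2 run t.
Qed.

Lemma run_descent t : F (x t.+1) <= F (x t) - c / 2 * sqdist (x t.+1) (x t).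
Proof. by have [_ [_ [_ [_ [_ [[_ dec] ->]]]]]] := proj2 run t. Qed.

Lemma run_F_decreasing : Un_decreasing (fun t => F (x t)).
Proof.
move=> t; have := run_descent t; have := dot_ge0 (vsub (x t.+1) (x t)).
by have := c_pos; nra.
Qed.

Lemma run_F_le t : F (x t) <= F (x 0).
Proof. by elim: t => [|t IH]; [lra | have := run_F_decreasing t; lra]. Qed.

Lemma run_bounded : exists B, forall t i, Rabs (x t i) <= B.
Proof.
have [B HB] := F_level_bounded (F (x 0)); exists B => t i.
exact: Rle_trans (Rabs_coord_le_norm _ i) (HB _ (run_feasible t) (run_F_le t)).
Qed.

Lemma run_F_lower_bounded : exists M, forall t, M <= F (x t).
Proof.
have [B xB] := run_bounded.
have [M1 HM1] := cont_bounded_on_box (has_gradient_cont f_grad) B.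
have [M2 HM2] := cont_bounded_on_box P1_cont B.
have [M3 HM3] := cont_bounded_on_box P2_cont B.
exists (- M1 - M2 - M3) => t; rewrite /Fval.
have := Rabs_le_inv _ _ (HM1 _ (xB t)); have := Rabs_le_inv _ _ (HM2 _ (xB t)).
by have := Rabs_le_inv _ _ (HM3 _ (xB t)); lra.
Qed.

(* The decrease is summable because [F] is bounded below along the run. *)
Lemma run_step_cv : Un_cv_coord (fun t => vsub (x t.+1) (x t)) (fun _ => 0).
Proof.
have [M HM] := run_F_lower_bounded.
have [lF HlF] : {l | Un_cv (fun t => F (x t)) l}.
  apply: decreasing_cv run_F_decreasing _; exists (- M) => r [t ->].
  by rewrite /opp_seq; have := HM t; lra.
have HlF1 : Un_cv (fun t => F (x t.+1)) lF by apply: Un_cv_subseq HlF _ => j; lia.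
have gap := CV_minus _ _ _ _ HlF HlF1; rewrite Rminus_diag in gap.
move=> i eps eps0.
have [N HN] := gap (c / 2 * (eps * eps)) ltac:(apply: Rmult_lt_0_compat; nra).
exists N => t tN; have := HN t tN; rewrite /R_dist Rminus_0_r Rabs_right; last first.
  by have := run_F_decreasing t; lra.
move=> small; have dec := run_descent t.
have step : norm (vsub (x t.+1) (x t)) * norm (vsub (x t.+1) (x t)) < eps * eps.
  by rewrite norm_sq; apply: (Rmult_lt_reg_l (c / 2)); lra.
rewrite Rminus_0_r; apply: Rle_lt_trans (Rabs_coord_le_norm _ i) _.
by have := norm_ge0 (vsub (x t.+1) (x t)); nra.
Qed.

Let Lf_threshold := 2 * INR n * Rabs Lf + c.
Let Lg_threshold := 2 * INR n * \big[Rplus/0]_(i < m) Rabs (Lg i).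
Let scale_bound (Th : R) := tau * (1 + Th / Lmin).

Lemma trial_accepted t k : (k <= K t)%N -> feasible g (xtr t k) ->
  Lf_threshold <= Lft t k ->
  F (xtr t k) <= F (x t) - c / 2 * sqdist (xtr t k) (x t).
Proof.
move=> kK feas; rewrite /Lf_threshold => L_large.
have [xi_sub [_ [_ [solves _]]]] := proj2 run t.
have [_ opt] := solves k kK; set z := xtr t k in feas opt *.
have := opt (x t) (fun i => ltac:(rewrite Gbar_self; exact: run_feasible)).
rewrite subobj_self /subobj dotBl => model_decrease.
have := descent_lemma f_grad df_lip (x t) z; have := xi_sub z.
have := dot_ge0 (vsub z (x t)); have := pos_INR n; have := Rabs_pos Lf.
have : (Lft t k / 2 - INR n * Rabs Lf) * sqdist z (x t) >= c / 2 * sqdist z (x t).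
  by apply/Rle_ge/Rmult_le_compat_r; [exact: dot_ge0 | lra].
by rewrite /Fval; lra.
Qed.

Lemma trial_constraint t k i : (k <= K t)%N -> 2 * INR n * Rabs (Lg i) <= Lgt t k i ->
  g i (xtr t k) <= 0.
Proof.
move=> kK L_large; have [_ [_ [_ [solves _]]]] := proj2 run t.
have := proj1 (solves k kK) i; rewrite /Gbar.
have := descent_lemma (g_grad i) (dg_lip i) (x t) (xtr t k).
have : INR n * Rabs (Lg i) * sqdist (xtr t k) (x t) <= Lgt t k i / 2 * sqdist (xtr t k) (x t).
  by apply: Rmult_le_compat_r; [exact: dot_ge0 | lra].
lra.
Qed.

Lemma scale_bound_ge1 {Th} : 0 <= Th -> 1 <= scale_bound Th.
Proof.
move=> Th0; have : 0 <= Th / Lmin by apply: Rmult_le_pos; [| apply/Rlt_le/Rinv_0_lt_compat].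
by rewrite /scale_bound; nra.
Qed.

(* A rejected trial had a too small parameter, so the scale before the
   increase was below [Th / Lmin]. *)
Lemma scale_bound_step {s L0 Th} : 1 <= s -> Lmin <= L0 -> s * L0 < Th ->
  tau * s <= scale_bound Th.
Proof.
move=> s1 L0_ge sL0; have : s < Th / Lmin.
  apply: (Rmult_lt_reg_r Lmin) => //; rewrite /Rdiv Rmult_assoc Rinv_l; nra.
by rewrite /scale_bound; nra.
Qed.

Lemma linesearch_scaling {t k} : (k <= K t)%N -> exists sf sg,
  1 <= sf <= scale_bound Lf_threshold /\ 1 <= sg <= scale_bound Lg_threshold /\
  Lft t k = sf * Lft t 0 /\ forall i, Lgt t k i = sg * Lgt t 0 i.
Proof.
have [_ [[Lf0 _] [Lg0 [_ [update _]]]]] := proj2 run t.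
have Lf_th0 : 0 <= Lf_threshold.
  by have := pos_INR n; have := Rabs_pos Lf; rewrite /Lf_threshold; nra.
have Lg_th0 : 0 <= Lg_threshold.
  apply: Rmult_le_pos; first by have := pos_INR n; lra.
  by apply: sumR_ge0 => i; apply: Rabs_pos.
elim: k => [|k IH] kK.
  exists 1, 1; have := scale_bound_ge1 Lf_th0; have := scale_bound_ge1 Lg_th0.
  by move=> *; do !split; try lra; move=> i; lra.
have [sf [sg [sf_b [sg_b [Ef Eg]]]]] := IH (ltnW kK).
have [rejected [infeasible_upd feasible_upd]] := update k kK.
case: (classic (feasible g (xtr t k))) => feas.
- have [-> ->] := feasible_upd feas; exists (tau * sf), sg.
  have : tau * sf <= scale_bound Lf_threshold.
    apply: scale_bound_step (proj1 sf_b) Lf0 _; rewrite -Ef; apply: Rnot_le_lt => large.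
    by apply: rejected; split => //; apply: trial_accepted (ltnW kK) feas large.
  by rewrite Ef; do !split => //; nra.
- have [-> ->] := infeasible_upd feas; exists sf, (tau * sg).
  have [i gi] : exists i, 0 < g i (xtr t k).
    by apply: NNPP => none; apply: feas => i; apply: Rnot_lt_le => gi; apply: none; exists i.
  have : tau * sg <= scale_bound Lg_threshold.
    apply: scale_bound_step (proj1 sg_b) (proj1 (Lg0 i)) _; rewrite -Eg.
    apply: Rnot_le_lt => large; suff : g i (xtr t k) <= 0 by lra.
    apply: trial_constraint (ltnW kK) (Rle_trans _ _ _ _ large).
    apply: Rmult_le_compat_l; first by have := pos_INR n; lra.
    by apply: (leR_sum_term (fun j => Rabs (Lg j))) => j; apply: Rabs_pos.
  by do !split => //; try nra; move=> j; rewrite Eg; ring.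
Qed.

Lemma accepted_params_bounded : exists Mf Mg, forall t,
  0 <= Lft t (K t) <= Mf /\ forall i, Lgt t (K t) i <= Mg.
Proof.
exists (scale_bound Lf_threshold * Lmax), (scale_bound Lg_threshold * Lmax) => t.
have [_ [[Lf0 Lf1] [Lg0 _]]] := proj2 run t.
have [sf [sg [sf_b [sg_b [-> Eg]]]]] := linesearch_scaling (leqnn (K t)).
split; first by split; nra.
by move=> i; rewrite Eg; have := Lg0 i; nra.
Qed.

Lemma run_xi_bounded : exists M, forall t i, Rabs (xi t i) <= M.
Proof.
have [B xB] := run_bounded; have [M HM] := subdiff_bounded_on_box P2_cont B.
by exists M => t i; apply: HM (xB t) (proj1 (proj2 run t)) i.
Qed.

(* The subproblem's Lagrangian inequality, with the line-search parameters
   replaced by bounds so that it passes to the limit without their convergence. *)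
Lemma run_step_lagrangian Mf Mg :
  (forall t, 0 <= Lft t (K t) <= Mf /\ forall i, Lgt t (K t) i <= Mg) ->
  forall t y, subobj df P1 (x t) (xi t) 0 (x t.+1) <=
    subobj df P1 (x t) (xi t) Mf y +
    \big[Rplus/0]_(i < m) (lam t i * Gbar g dg y (x t) (fun _ => Mg) i).
Proof.
move=> params t y; have [[Lf0 LfM] LgM] := params t.
have [lam0 [opt compl]] := lam_mult t.
have := opt y; rewrite big1 => [lag|i _]; last exact: compl.
have : Lft t (K t) / 2 * sqdist y (x t) <= Mf / 2 * sqdist y (x t).
  by apply: Rmult_le_compat_r; [exact: dot_ge0 | lra].
have : 0 <= Lft t (K t) / 2 * sqdist (x t.+1) (x t).
  by apply: Rmult_le_pos; [lra | exact: dot_ge0].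
have : \big[Rplus/0]_(i < m) (lam t i * Gbar g dg y (x t) (Lgt t (K t)) i) <=
       \big[Rplus/0]_(i < m) (lam t i * Gbar g dg y (x t) (fun _ => Mg) i).
  apply: leR_sum => i; apply: Rmult_le_compat_l => //; rewrite /Gbar.
  by have := LgM i; have := dot_ge0 (vsub y (x t)); nra.
by move: lag; rewrite /subobj; lra.
Qed.

Lemma run_subseq_cv (ts : nat -> nat) {Mu : nat -> 'I_m -> R} {B} :
  (forall k i, Rabs (Mu k i) <= B) ->
  exists phi xs u mu, increasing phi /\ Un_cv_coord (fun j => x (ts (phi j))) xs /\
    Un_cv_coord (fun j => xi (ts (phi j))) u /\ Un_cv_coord (fun j => Mu (phi j)) mu.
Proof.
move=> MuB; have [Bx xB] := run_bounded; have [Bxi xiB] := run_xi_bounded.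
pose data k (a : ('I_n + 'I_n) + 'I_m) :=
  match a with inl (inl i) => x (ts k) i | inl (inr i) => xi (ts k) i | inr i => Mu k i end.
have dataB : forall k a, Rabs (data k a) <= Rabs Bx + Rabs Bxi + Rabs B.
  move=> k a; have := Rle_abs Bx; have := Rle_abs Bxi; have := Rle_abs B.
  have := Rabs_pos Bx; have := Rabs_pos Bxi; have := Rabs_pos B.
  by case: a => [[i|i]|i] /=; [have := xB (ts k) i | have := xiB (ts k) i | have := MuB k i]; lra.
have [phi [l [phi_incr dl]]] := bounded_subseq dataB.
exists phi, (fun i => l (inl (inl i))), (fun i => l (inl (inr i))), (fun i => l (inr i)).
split => //; split; [|split] => i;
  [exact: (dl (inl (inl i))) | exact: (dl (inl (inr i))) | exact: (dl (inr i))].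
Qed.

(* Used with [rs = 1], giving the KKT conditions, and with
   [rs j = / norm (lam (T j))], giving an abnormal multiplier. *)
Lemma run_limit_lagrangian {T : nat -> nat} {rs : nat -> R} {r0 xs u mu} :
  (forall j, (j <= T j)%N) -> (forall j, 0 <= rs j) -> Un_cv rs r0 ->
  Un_cv_coord (fun j => x (T j)) xs -> Un_cv_coord (fun j => xi (T j)) u ->
  Un_cv_coord (fun j i => rs j * lam (T j) i) mu ->
  exists C w, feasible g xs /\ subdiff P2 xs u /\ (forall i, 0 <= mu i) /\
    forall y, r0 * P1 xs <=
      r0 * subobj df P1 xs u C y + \big[Rplus/0]_(i < m) (mu i * Gbar g dg y xs w i).
Proof.
move=> T_ge rs0 rsl xl ul mul; have [Mf [Mg params]] := accepted_params_bounded.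
have x1l : Un_cv_coord (fun j => x (T j).+1) xs.
  move=> i; have := CV_plus _ _ _ _ (xl i) (Un_cv_subseq (run_step_cv i) T_ge).
  by rewrite Rplus_0_r; apply: Un_cv_ext => j; rewrite /vsub; ring.
exists Mf, (fun _ => Mg); split; [|split; [|split]].
- move=> i; apply: (Rle_cv_lim _ (Un_cv_cont (g_cont i) xl) (Un_cv_const 0)) => j.
  exact: run_feasible.
- move=> y; apply: (Rle_cv_lim _ _ (Un_cv_const (P2 y))) => [j|].
    exact: (proj1 (proj2 run (T j)) y).
  apply: CV_plus; first exact: Un_cv_cont P2_cont xl.
  exact: (Un_cv_dot ul (Un_cv_coordB (fun i => Un_cv_const (y i)) xl)).
- move=> i; apply: (Rle_cv_lim _ (Un_cv_const 0) (mul i)) => j.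
  by apply: Rmult_le_pos => //; exact: (proj1 (lam_mult (T j))).
- move=> y; rewrite -(subobj_self df P1 xs u 0).
  have yl : Un_cv_coord (fun _ => y) y by move=> i; apply: Un_cv_const.
  apply: (Rle_cv_lim _ (CV_mult _ _ _ _ rsl (Un_cv_subobj _ _ df_cont P1_cont 0 xl ul x1l))
    (CV_plus _ _ _ _ (CV_mult _ _ _ _ rsl (Un_cv_subobj _ _ df_cont P1_cont Mf xl ul yl))
       (Un_cv_multiplier_sum _ _ g_cont dg_cont y (fun _ => Mg) mul xl))) => j.
  have -> : \big[Rplus/0]_(i < m) (rs j * lam (T j) i * Gbar g dg y (x (T j)) (fun _ => Mg) i)
    = rs j * \big[Rplus/0]_(i < m) (lam (T j) i * Gbar g dg y (x (T j)) (fun _ => Mg) i).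
    by rewrite mulR_sumr; apply: eq_bigr => i _; ring.
  rewrite -Rmult_plus_distr_l; apply: Rmult_le_compat_l => //.
  exact: run_step_lagrangian params (T j) y.
Qed.

Lemma run_multipliers_bounded : exists B, forall t, norm (lam t) <= B.
Proof.
apply: NNPP => unbounded.
have freq : forall k N, exists p, (N <= p)%N /\ INR k + 1 < norm (lam p).
  move=> k N; apply: NNPP => none; apply: unbounded.
  exists (Rmax (INR k + 1) (\big[Rplus/0]_(p < N) norm (lam p))) => t.
  case: (ltnP t N) => [tN | Nt].
    apply: Rle_trans (Rmax_r _ _).
    by apply: (leR_sum_term (fun p : 'I_N => norm (lam p)) (Ordinal tN)) => p; apply: norm_ge0.
  by apply: Rle_trans (Rmax_l _ _); apply: Rnot_lt_le => large; apply: none; exists t.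
have [ts [ts_incr ts_large]] := frequently_subseq freq.
have lam_pos : forall k, 1 <= norm (lam (ts k)).
  by move=> k; have := ts_large k; have := pos_INR k; lra.
pose rs k := / norm (lam (ts k)).
have rs_pos : forall k, 0 < rs k by move=> k; apply: Rinv_0_lt_compat; have := lam_pos k; lra.
have rs_norm : forall k, rs k * norm (lam (ts k)) = 1.
  by move=> k; apply: Rinv_l; have := lam_pos k; lra.
have MuB : forall k i, Rabs (rs k * lam (ts k) i) <= 1.
  move=> k i; rewrite Rabs_mult Rabs_right; last by have := rs_pos k; lra.
  rewrite -(rs_norm k); apply: Rmult_le_compat_l; last exact: Rabs_coord_le_norm.
  by have := rs_pos k; lra.
have [phi [xs [u [mu [phi_incr [xl [ul mul]]]]]]] := run_subseq_cv ts MuB.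
have T_ge : forall j, (j <= ts (phi j))%N.
  by move=> j; have := increasing_ge phi_incr j; have := increasing_ge ts_incr (phi j); lia.
have rs_small : forall k, rs k <= / (INR k + 1).
  move=> k; apply: Rinv_le_contravar; first by have := pos_INR k; lra.
  by have := ts_large k; lra.
have rsl : Un_cv (fun j => rs (phi j)) 0.
  move=> eps eps0; have [N HN] := inv_INR_succ_small eps0; exists N => j jN.
  rewrite /R_dist Rminus_0_r Rabs_right; last by have := rs_pos (phi j); lra.
  apply: Rle_lt_trans (rs_small _) (Rle_lt_trans _ _ _ _ (HN j ltac:(lia))).
  apply: Rinv_le_contravar; first by have := pos_INR j; lra.
  have : INR j <= INR (phi j) by apply/le_INR; have := increasing_ge phi_incr j; lia.
  lra.
have [C [w [feas [_ [mu0 lag]]]]] :=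
  run_limit_lagrangian T_ge (fun j => Rlt_le _ _ (rs_pos (phi j))) rsl xl ul mul.
have lag0 : forall y, 0 <= \big[Rplus/0]_(i < m) (mu i * Gbar g dg y xs w i).
  by move=> y; have := lag y; rewrite !Rmult_0_l; lra.
have mu_eq0 := MFCQ_multipliers_eq0 _ _ mfcq feas mu0 lag0.
have mu_unit : dot mu mu = 1.
  apply: UL_sequence (Un_cv_dot mul mul) _.
  apply: (Un_cv_ext _ _ _ _ (Un_cv_const 1)) => j.
  by rewrite dotZl dotZr -norm_sq; have := rs_norm (phi j); nra.
by move: mu_unit; rewrite /dot big1 => [|i _]; [lra | rewrite mu_eq0; ring].
Qed.

Lemma run_accumulation_stationary xs :
  accumulation_point x xs -> stationary f df P1 P2 g dg xs.
Proof.
move=> acc; have [B lamB] := run_multipliers_bounded.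
have freq : forall k N, exists p, (N <= p)%N /\ norm (vsub (x p) xs) < / (INR k + 1).
  by move=> k N; apply: acc; apply: Rinv_0_lt_compat; have := pos_INR k; lra.
have [ts [ts_incr ts_close]] := frequently_subseq freq.
have MuB : forall k i, Rabs (1 * lam (ts k) i) <= B.
  by move=> k i; rewrite Rmult_1_l; apply: Rle_trans (Rabs_coord_le_norm _ i) (lamB _).
have [phi [xs' [u [mu [phi_incr [xl [ul mul]]]]]]] := run_subseq_cv ts MuB.
have T_ge : forall j, (j <= ts (phi j))%N.
  by move=> j; have := increasing_ge phi_incr j; have := increasing_ge ts_incr (phi j); lia.
have xs'_xs : xs' = xs.
  apply: functional_extensionality => i; apply: UL_sequence (xl i) _.
  move=> eps eps0; have [N HN] := inv_INR_succ_small eps0; exists N => j jN.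
  apply: Rle_lt_trans (Rabs_coord_le_norm (vsub (x (ts (phi j))) xs) i) _.
  apply: Rlt_trans (ts_close _) (Rle_lt_trans _ _ _ _ (HN j ltac:(lia))).
  apply: Rinv_le_contravar; first by have := pos_INR j; lra.
  have : INR j <= INR (phi j) by apply/le_INR; have := increasing_ge phi_incr j; lia.
  lra.
subst xs'.
have [C [w [feas [u_sub [mu0 lag]]]]] :=
  run_limit_lagrangian T_ge (fun _ => Rle_0_1) (Un_cv_const 1) xl ul mul.
apply: (stationary_of_limit _ _ _ _ _ _ (C := C) (w := w) P1_conv feas u_sub mu0) => y.
by have := lag y; rewrite !Rmult_1_l.
Qed.

Lemma SCPls_convergence : (exists B, forall t, norm (lam t) <= B) /\
  forall xs, accumulation_point x xs -> stationary f df P1 P2 g dg xs.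
Proof.
split; first exact: run_multipliers_bounded.
exact: run_accumulation_stationary.
Qed.

End Algorithm.

Theorem mainTheorem3 (n m : nat)
  (f : Vec n -> R) (df : Vec n -> Vec n) (P1 P2 : Vec n -> R)
  (g : 'I_m -> Vec n -> R) (dg : 'I_m -> Vec n -> Vec n)
  (Hf : has_gradient f df) (Hdf_cont : cont_vec df)
  (HP1c : convex_fun P1) (HP1cont : cont P1)
  (HP2c : convex_fun P2) (HP2cont : cont P2)
  (Hgcont : forall i, cont (g i))
  (Hfeas : exists x0, feasible g x0)
  (Lf_ : R) (HLf : lipschitz_vec df Lf_)
  (Hg : forall i, has_gradient (g i) (dg i))
  (Lg_ : 'I_m -> R) (HLg : forall i, lipschitz_vec (dg i) (Lg_ i))
  (Hlev : level_bounded f P1 P2 g)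
  (Hdg_cont : forall i, cont_vec (dg i))
  (Hmfcq : MFCQ g dg)
  (c Lmin Lmax tau : R) (Hc : 0 < c) (HL : 0 < Lmin < Lmax) (Htau : 1 < tau)
  (x xi : nat -> Vec n) (K : nat -> nat)
  (Lft : nat -> nat -> R) (Lgt : nat -> nat -> 'I_m -> R) (xtr : nat -> nat -> Vec n)
  (Hrun : SCPls_run f df P1 P2 g dg c Lmin Lmax tau x xi K Lft Lgt xtr)
  (lam : nat -> 'I_m -> R)
  (Hlam : forall t, sub_multiplier df P1 g dg (x t) (xi t)
                      (Lft t (K t)) (Lgt t (K t)) (x t.+1) (lam t)) :
  (exists B, forall t, norm (lam t) <= B) /\
  (forall xs, accumulation_point x xs -> stationary f df P1 P2 g dg xs).
Proof.
have Lmin_pos : 0 < Lmin by lra.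
exact: (SCPls_convergence n m f df P1 P2 g dg Hf Hdf_cont HP1c HP1cont HP2cont Hgcont
  Hdg_cont Lf_ HLf Hg Lg_ HLg Hlev Hmfcq c Lmin Lmax tau Hc Lmin_pos Htau
  x xi K Lft Lgt xtr Hrun lam Hlam).
Qed.
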